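(* Let $P$ be a polyomino whose matrix contains neither $S_1=\begin{bmatrix}1&0\\0&1\end{bmatrix}$ nor $S_2=\begin{bmatrix}0&1\\1&0\end{bmatrix}$ as a submatrix (an $L$-polyomino). Then $P$ is uniquely determined by its horizontal and vertical projections, i.e. no other binary matrix has the same vector of row sums and the same vector of column sums as the matrix of $P$.
   Context: A polyomino is a finite union of unit cells of $\mathbb{Z}\times\mathbb{Z}$ that is connected via edge adjacency, up to translation, identified with the binary matrix of its minimal bounding rectangle (entry $1$ iff the corresponding unit square is a cell). A matrix is a submatrix of another if obtained by deleting rows and/or columns. The horizontal (resp. vertical) projections of a binary matrix are the vector of its row sums (resp. column sums). *)

From mathcomp Require Import all_boot all_order all_algebra.
Set Implicit Arguments. Unset Strict Implicit. Unset Printing Implicit Defensive.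

(* A binary matrix is 'M[bool]_(m, n); entry true = 1. *)

Definition hproj m n (A : 'M[bool]_(m, n)) (i : 'I_m) : nat :=
  \sum_(j < n) (A i j : nat).

Definition vproj m n (A : 'M[bool]_(m, n)) (j : 'I_n) : nat :=
  \sum_(i < m) (A i j : nat).

Definition cell_adj m n (x y : 'I_m * 'I_n) : bool :=
  ((x.1 == y.1 :> nat) && ((x.2.+1 == y.2 :> nat) || (y.2.+1 == x.2 :> nat)))
  || ((x.2 == y.2 :> nat) && ((x.1.+1 == y.1 :> nat) || (y.1.+1 == x.1 :> nat))).

Definition cell_rel m n (A : 'M[bool]_(m, n)) : rel ('I_m * 'I_n) :=
  fun x y => [&& A x.1 x.2, A y.1 y.2 & cell_adj x y].

(* A is the matrix of a polyomino: its cells are nonempty and edge-connected,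
   and its bounding rectangle is minimal (every row and column has a cell). *)
Definition is_polyomino m n (A : 'M[bool]_(m, n)) : Prop :=
  [/\ exists x : 'I_m * 'I_n, A x.1 x.2,
      forall x y : 'I_m * 'I_n, A x.1 x.2 -> A y.1 y.2 -> connect (cell_rel A) x y,
      forall i : 'I_m, exists j : 'I_n, A i j
    & forall j : 'I_n, exists i : 'I_m, A i j].

Definition contains_S1 m n (A : 'M[bool]_(m, n)) : Prop :=
  exists (i1 i2 : 'I_m) (j1 j2 : 'I_n), [/\ i1 < i2, j1 < j2 &
    [&& A i1 j1, ~~ A i1 j2, ~~ A i2 j1 & A i2 j2]].

Definition contains_S2 m n (A : 'M[bool]_(m, n)) : Prop :=
  exists (i1 i2 : 'I_m) (j1 j2 : 'I_n), [/\ i1 < i2, j1 < j2 &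
    [&& ~~ A i1 j1, A i1 j2, A i2 j1 & ~~ A i2 j2]].

Definition L_polyomino m n (A : 'M[bool]_(m, n)) : Prop :=
  [/\ is_polyomino A, ~ contains_S1 A & ~ contains_S2 A].

(** The forbidden submatrices S1 and S2 say exactly that any two columns of
   the matrix are comparable under inclusion.  Ordering the columns by size,
   a row with row sum r then consists of the r largest columns, so the entry
   in row i and column j is 1 iff q(j) <= r(i), where q(j) counts the
   columns at least as large as column j.  Such a threshold matrix is the
   unique maximiser of the linear functional X |-> sum X(i,j)(r(i) - q(j) + 1/2)
   among binary matrices, and this functional only depends on the row and
   column sums of X. *)
From mathcomp Require Import all_boot all_order all_algebra.
From mathcomp Require Import zify.
Set Implicit Arguments. Unset Strict Implicit.

Section Projections.
Variables (m n : nat).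
Implicit Types (X : 'M[bool]_(m, n)).

Lemma hproj_card X i : hproj X i = #|[pred j | X i j]|.
Proof.
rewrite /hproj -sum1_card [RHS]big_mkcond /=.
by apply: eq_bigr => j _; rewrite inE; case: (X i j).
Qed.

Lemma sum_row_weights X (f : 'I_m -> nat) :
  \sum_(i < m) \sum_(j < n) (X i j : nat) * f i = \sum_(i < m) f i * hproj X i.
Proof.
apply: eq_bigr => i _; rewrite /hproj big_distrr /=.
by apply: eq_bigr => j _; rewrite mulnC.
Qed.

Lemma sum_col_weights X (g : 'I_n -> nat) :
  \sum_(i < m) \sum_(j < n) (X i j : nat) * g j = \sum_(j < n) g j * vproj X j.
Proof.
rewrite exchange_big; apply: eq_bigr => j _; rewrite /vproj big_distrr /=.
by apply: eq_bigr => i _; rewrite mulnC.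
Qed.

Lemma threshold_matrix_projections_uniq X (a : 'I_m -> nat) (b : 'I_n -> nat) :
  (forall i j, X i j = (b j <= a i)) ->
  forall Y, hproj Y =1 hproj X -> vproj Y =1 vproj X -> Y = X.
Proof.
move=> thX Y hY vY.
pose wr i := (a i).*2.+1; pose wc j := (b j).*2.
(* Cellwise form of [(Y - X)(a i - b j + 1/2) <= 0], cleared of subtraction. *)
have cell i j : (Y i j : nat) * wr i + (X i j : nat) * wc j <=
                (X i j : nat) * wr i + (Y i j : nat) * wc j ?= iff (Y i j == X i j).
  rewrite /wr /wc thX; case: leqP => hab; case: (Y i j) => /=; split => //; lia.
have [_ sum_eq] :
  \sum_(i < m) \sum_(j < n) ((Y i j : nat) * wr i + (X i j : nat) * wc j) <=
  \sum_(i < m) \sum_(j < n) ((X i j : nat) * wr i + (Y i j : nat) * wc j)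
    ?= iff [forall i, [forall j, Y i j == X i j]].
  by apply: leqif_sum => i _; apply: leqif_sum => j _; apply: cell.
have : \sum_(i < m) \sum_(j < n) ((Y i j : nat) * wr i + (X i j : nat) * wc j) ==
       \sum_(i < m) \sum_(j < n) ((X i j : nat) * wr i + (Y i j : nat) * wc j).
  rewrite !(eq_bigr _ (fun i _ => big_split _ _ _ _ _)) !big_split /=.
  rewrite !sum_row_weights !sum_col_weights.
  rewrite (eq_bigr _ (fun i _ => congr1 _ (hY i))).
  by rewrite [E in _ + E == _](eq_bigr _ (fun j _ => congr1 _ (esym (vY j)))) addnC.
rewrite sum_eq => /forallP YX; apply/matrixP => i j.
by have /forallP/(_ j)/eqP := YX i.
Qed.

End Projections.

Section NestedColumns.
Variables (m n : nat) (A : 'M[bool]_(m, n)).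

Definition col_sub (j j' : 'I_n) := forall i, A i j -> A i j'.

Lemma cols_nested_of_no_S1_S2 : ~ contains_S1 A -> ~ contains_S2 A ->
  forall j j', col_sub j j' \/ col_sub j' j.
Proof.
move=> noS1 noS2 j j'; rewrite /col_sub.
case: (boolP [exists i, A i j && ~~ A i j']) => [/existsP[i1 /andP[h1 h1']]|];
  last by rewrite negb_exists => /forallP nj; left=> i Aij; move: (nj i); rewrite Aij negbK.
case: (boolP [exists i, A i j' && ~~ A i j]) => [/existsP[i2 /andP[h2 h2']]|];
  last by rewrite negb_exists => /forallP nj; right=> i Aij'; move: (nj i); rewrite Aij' negbK.
exfalso.
case: (ltngtP i1 i2) => [lti|lti|/val_inj e]; last by rewrite e h2 in h1'.
  case: (ltngtP j j') => [ltj|ltj|/val_inj e]; last by rewrite -e h1 in h1'.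
    by apply: noS1; exists i1, i2, j, j'; split; rewrite // h1 h1' h2 h2'.
  by apply: noS2; exists i1, i2, j', j; split; rewrite // h1 h1' h2 h2'.
case: (ltngtP j j') => [ltj|ltj|/val_inj e]; last by rewrite -e h1 in h1'.
  by apply: noS2; exists i2, i1, j, j'; split; rewrite // h1 h1' h2 h2'.
by apply: noS1; exists i2, i1, j', j; split; rewrite // h1 h1' h2 h2'.
Qed.

Lemma col_sub_vproj_le j j' : col_sub j j' -> vproj A j <= vproj A j'.
Proof.
by move=> sub; apply: leq_sum => i _; case: (boolP (A i j)) => // /sub ->.
Qed.

Lemma col_sub_vproj_eq j j' :
  col_sub j j' -> vproj A j' <= vproj A j -> col_sub j' j.
Proof.
move=> sub le i Aij'.
have cell k : (A k j : nat) <= A k j' ?= iff ((A k j : nat) == A k j').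
  by split; case: (boolP (A k j)) => [/sub ->|] //; case: (A k j').
have [_ sum_eq] := leqif_sum (fun k (_ : true) => cell k).
have : vproj A j == vproj A j' by rewrite eqn_leq le col_sub_vproj_le.
by rewrite /vproj sum_eq => /forallP/(_ i); rewrite Aij'; case: (A i j).
Qed.

Hypothesis cols_nested : forall j j', col_sub j j' \/ col_sub j' j.

Definition col_rank (j : 'I_n) := #|[pred j' : 'I_n | vproj A j <= vproj A j']|.

Lemma nested_cols_threshold i j : A i j = (col_rank j <= hproj A i).
Proof.
rewrite hproj_card; case: (boolP (A i j)) => Aij.
  apply/esym/subset_leq_card/subsetP => j'; rewrite !inE => le.
  by case: (cols_nested j j') => sub; [apply: sub | apply: (col_sub_vproj_eq sub)].
apply/esym/negbTE; rewrite -ltnNge.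
have := cardU1 j [pred j0 | A i j0]; rewrite inE (negbTE Aij) add1n => <-.
apply/subset_leq_card/subsetP => j'; rewrite !inE => /predU1P[->//|Aij'].
case: (cols_nested j j') => sub; first exact: col_sub_vproj_le.
by rewrite (sub i Aij') in Aij.
Qed.

End NestedColumns.

Theorem proposition16 (m n : nat) (A : 'M[bool]_(m, n)) :
  L_polyomino A ->
  forall B : 'M[bool]_(m, n),
    hproj B =1 hproj A -> vproj B =1 vproj A -> B = A.
Proof.
move=> [_ noS1 noS2].
apply: (threshold_matrix_projections_uniq (a := hproj A) (b := col_rank A)).
exact: nested_cols_threshold (cols_nested_of_no_S1_S2 noS1 noS2).
Qed.
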